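(* Let $p=(a,b,c)\in P$ and let $H_p=\{(x,-\tfrac{x}{a},z): x,z\in\mathbb{R},\ z>\tfrac{x}{a}\}$. Every bounded invariant set of the flow of $F_p$ which is not a fixed point (nor limits to one) intersects $H_p$ transversely at least once. In particular, every periodic trajectory of $F_p$ intersects $H_p$ transversely at least once.
   Context: For $p=(a,b,c)\in\mathbb{R}^3$, $F_p$ is the Rössler vector field $\dot x=-y-z,\ \dot y=x+ay,\ \dot z=bx+z(x-c)$ on $\mathbb{R}^3$. $P\subseteq\mathbb{R}^3$ is an open set of parameters such that for every $p=(a,b,c)\in P$: (1) $a,b\in(0,1)$, $c>1$; (2) $F_p$ has exactly two fixed points, $P_{In}=(0,0,0)$ and $P_{Out}=(c-ab,b-\frac{c}{a},\frac{c}{a}-b)$, both saddle-foci; (3) $P_{In}$ has a one-dimensional stable and two-dimensional unstable manifold, $P_{Out}$ a one-dimensional unstable and two-dimensional stable manifold; (4) at least one of the two saddle indices $\nu_{In},\nu_{Out}$ (ratio of absolute real part of the complex eigenvalues to absolute value of the real eigenvalue) is $<1$. The plane $\{(x,-x/a,z)\}$ is the set $\{\dot y=0\}$; $F_p$ is tangent to it exactly along the line $\{(t,-t/a,t/a)\}$, and $H_p$ is the upper component of its complement in the plane. *)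

From HB Require Import structures.
From mathcomp Require Import all_boot all_order all_algebra.
From mathcomp Require Import all_classical all_reals all_analysis.
Set Implicit Arguments.
Unset Strict Implicit.
Unset Printing Implicit Defensive.
Import Order.TTheory GRing.Theory Num.Theory.
Import numFieldNormedType.Exports.
Local Open Scope classical_set_scope.
Local Open Scope ring_scope.

Section Rossler.
Variable R : realType.

Definition px (q : R * R * R) : R := q.1.1.
Definition py (q : R * R * R) : R := q.1.2.
Definition pz (q : R * R * R) : R := q.2.

Definition rossler (a b c : R) (q : R * R * R) : R * R * R :=
  ((- py q - pz q, px q + a * py q), b * px q + pz q * (px q - c)).

Definition is_fixed_point (a b c : R) (q : R * R * R) : Prop :=
  rossler a b c q = ((0, 0), 0).

Definition P_In : R * R * R := ((0, 0), 0).
Definition P_Out (a b c : R) : R * R * R := ((c - a * b, b - c / a), c / a - b).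

Definition rossler_jac (a b c : R) (q : R * R * R) : 'M[R]_3 :=
  \matrix_(i < 3, j < 3)
     nth 0 (nth [::] [:: [:: 0; -1; -1];
                         [:: 1; a; 0];
                         [:: b + pz q; 0; px q - c]] i) j.

(* The eigenvalues of M are lam (real) and sig +- i om with om <> 0,
   i.e. the characteristic polynomial factors accordingly. *)
Definition spectrum_saddle_focus (M : 'M[R]_3) (lam sig om : R) : Prop :=
  om != 0 /\
  char_poly M = ('X - lam%:P) * (('X - sig%:P) ^+ 2 + (om ^+ 2)%:P).

Definition rossler_param_ok (p : R * R * R) : Prop :=
  let a := p.1.1 in let b := p.1.2 in let c := p.2 in
  [/\ (0 < a < 1) /\ (0 < b < 1) /\ 1 < c,
      (forall q, is_fixed_point a b c q <-> q = P_In \/ q = P_Out a b c)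
        /\ P_In != P_Out a b c
    & (* (2),(3),(4): both saddle-foci; P_In: 1-dim stable / 2-dim unstable,
         P_Out: 1-dim unstable / 2-dim stable; some saddle index < 1 *)
      exists lI sI oI lO sO oO : R,
        [/\ spectrum_saddle_focus (rossler_jac a b c P_In) lI sI oI,
            spectrum_saddle_focus (rossler_jac a b c (P_Out a b c)) lO sO oO,
            lI < 0 < sI,
            sO < 0 < lO
          & `|sI| / `|lI| < 1 \/ `|sO| / `|lO| < 1]].

(* H_p : upper component of {ydot = 0} minus the tangency line *)
Definition H_p (a : R) : set (R * R * R) :=
  [set q | py q = - px q / a /\ px q / a < pz q].

(* F_p(q) is transverse to the plane {x + a y = 0} (normal vector (1,a,0)) *)
Definition transverse_to_plane (a b c : R) (q : R * R * R) : Prop :=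
  px (rossler a b c q) + a * py (rossler a b c q) != 0.

Definition is_trajectory (a b c : R) (g : R -> R * R * R) : Prop :=
  forall t : R, is_derive t 1 g (rossler a b c (g t)).

Definition invariant_set (a b c : R) (S : set (R * R * R)) : Prop :=
  forall q, S q -> exists g : R -> R * R * R,
    is_trajectory a b c g /\ g 0 = q /\ forall t, S (g t).

Definition bounded3 (S : set (R * R * R)) : Prop :=
  exists M : R, forall q, S q -> `|px q| <= M /\ `|py q| <= M /\ `|pz q| <= M.

End Rossler.

From HB Require Import structures.
From mathcomp Require Import all_boot all_order all_algebra.
From mathcomp Require Import all_classical all_reals all_analysis.
From mathcomp Require Import ring lra.
Import Order.TTheory GRing.Theory Num.Theory.
Import numFieldNormedType.Exports.
Local Open Scope classical_set_scope.
Local Open Scope ring_scope.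

(* Along a trajectory y' = x + a y vanishes exactly on the plane {ydot = 0},
   and there y'' = - y - z.  At a local maximum of y we have y' = 0 and
   y'' <= 0, and y'' = 0 forces y''' = - z' = 0, i.e. a fixed point; so a
   local maximum of y away from the fixed points lies in H_p, where the flow
   is transverse to the plane.  On a periodic orbit y attains a maximum, and
   a nonconstant orbit meets no fixed point by uniqueness of solutions
   (Gronwall's inequality for the squared distance to the fixed point).  On a
   bounded invariant set avoiding H_p, y has no local maximum along a
   trajectory, hence is eventually monotone and converges; Barbalat's lemma
   then drives y', y'' and z' to 0, so the trajectory converges to a fixed
   point lying in the closure of the set. *)

Section RealDerivatives.
Context {R : realType}.
Implicit Types (f df E dE : R -> R) (m s t u d e K : R).

Lemma is_derive1_continuous {f df} :
  (forall t, is_derive t 1 f (df t)) -> continuous f.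
Proof.
move=> Hf t; apply/differentiable_continuous/derivable1_diffP.
exact: (@ex_derive _ _ _ _ _ _ _ (Hf t)).
Qed.

Lemma derive_gt0_lt {f df s t} : (forall u, is_derive u 1 f (df u)) -> s < t ->
  (forall u, s < u -> u < t -> 0 < df u) -> f s < f t.
Proof.
move=> Hf st df_gt0; rewrite -subr_gt0.
have [u /[!in_itv]/andP[su ut] ->] :=
  MVT st (fun u _ => Hf u) (continuous_subspaceT (is_derive1_continuous Hf)).
by rewrite mulr_gt0 ?subr_gt0 ?df_gt0.
Qed.

Lemma derive_ge0_le {f df s t} : (forall u, is_derive u 1 f (df u)) -> s <= t ->
  (forall u, s < u -> u < t -> 0 <= df u) -> f s <= f t.
Proof.
move=> Hf; rewrite le_eqVlt => /predU1P[-> //|st] df_ge0; rewrite -subr_ge0.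
have [u /[!in_itv]/andP[su ut] ->] :=
  MVT st (fun u _ => Hf u) (continuous_subspaceT (is_derive1_continuous Hf)).
by rewrite mulr_ge0 ?subr_ge0 ?df_ge0 ?ltW.
Qed.

Lemma derive_lt0_gt {f df s t} : (forall u, is_derive u 1 f (df u)) -> s < t ->
  (forall u, s < u -> u < t -> df u < 0) -> f t < f s.
Proof.
move=> Hf st df_lt0; rewrite -ltrN2.
apply: (derive_gt0_lt (fun u => is_deriveN (Hf u)) st) => u su ut.
by rewrite oppr_gt0 df_lt0.
Qed.

Lemma is_derive_expRM (k t : R) : is_derive t 1 (fun u => expR (k * u)) (expR (k * t) * k).
Proof.
apply: is_derive1_comp; rewrite -[k in is_derive _ _ _ k]mulr1.
exact: is_deriveZ.
Qed.

Lemma gronwall_eq0 {E dE s t} K : (forall u, is_derive u 1 E (dE u)) ->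
  (forall u, 0 <= E u) -> s <= t -> (forall u, s <= u -> u <= t -> `|dE u| <= K * E u) ->
  E s = 0 <-> E t = 0.
Proof.
move=> HE E_ge0 st dE_le; have Hexp := is_derive_expRM.
have dE_bounds u : s < u -> u < t -> - (K * E u) <= dE u <= K * E u.
  by move=> su ut; rewrite -ler_norml dE_le ?ltW.
split=> [Es0|Et0]; apply/eqP; rewrite eq_le E_ge0 andbT.
- have : - (E s * expR (- K * s)) <= - (E t * expR (- K * t)).
    apply: (derive_ge0_le (fun u => is_deriveN (is_deriveM (HE u) (Hexp (- K) u))) st).
    move=> u su ut; have := dE_bounds u su ut; have := expR_gt0 (- K * u).
    rewrite -![_ *: _]/(_ * _); nra.
  by rewrite Es0 mul0r oppr0 oppr_ge0 pmulr_lle0 // expR_gt0.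
- have : E s * expR (K * s) <= E t * expR (K * t).
    apply: (derive_ge0_le (fun u => is_deriveM (HE u) (Hexp K u)) st).
    move=> u su ut; have := dE_bounds u su ut; have := expR_gt0 (K * u).
    rewrite -![_ *: _]/(_ * _); nra.
  by rewrite Et0 mul0r pmulr_lle0 // expR_gt0.
Qed.

Lemma continuous_gt0_near {f m} : {for m, continuous f} -> 0 < f m ->
  exists2 e, 0 < e & forall u, m - e < u -> u < m + e -> 0 < f u.
Proof.
move=> cf /(cvgr_gt _ cf)/nbhs_ballP[e e0 He]; exists e => // u mu um.
by apply: He; rewrite ball_itv /= in_itv /= mu um.
Qed.

Lemma continuous_lt0_near {f m} : {for m, continuous f} -> f m < 0 ->
  exists2 e, 0 < e & forall u, m - e < u -> u < m + e -> f u < 0.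
Proof.
move=> cf /(cvgr_lt _ cf)/nbhs_ballP[e e0 He]; exists e => // u mu um.
by apply: He; rewrite ball_itv /= in_itv /= mu um.
Qed.

Definition is_local_max f m :=
  exists2 d, 0 < d & forall u, m - d < u -> u < m + d -> f u <= f m.

Lemma right_max_no_rise {f df m} d e : (forall u, is_derive u 1 f (df u)) ->
  0 < d -> 0 < e -> (forall u, m < u -> u < m + d -> f u <= f m) ->
  ~ (forall u, m < u -> u < m + e -> 0 < df u).
Proof.
move=> Hf d0 e0 fmax df_gt0; pose r := Num.min d e.
have [r0 rd re] : [/\ 0 < r, r <= d & r <= e] by rewrite lt_min d0 e0 !ge_min !lexx ?orbT.
have : f m < f (m + r / 2).
  by apply: (derive_gt0_lt Hf) => [|u mu um]; [|apply: df_gt0]; lra.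
by rewrite ltNge fmax //; lra.
Qed.

Lemma left_max_no_fall {f df m} d e : (forall u, is_derive u 1 f (df u)) ->
  0 < d -> 0 < e -> (forall u, m - d < u -> u < m -> f u <= f m) ->
  ~ (forall u, m - e < u -> u < m -> df u < 0).
Proof.
move=> Hf d0 e0 fmax df_lt0; pose r := Num.min d e.
have [r0 rd re] : [/\ 0 < r, r <= d & r <= e] by rewrite lt_min d0 e0 !ge_min !lexx ?orbT.
have : f m < f (m - r / 2).
  by apply: (derive_lt0_gt Hf) => [|u mu um]; [|apply: df_lt0]; lra.
by rewrite ltNge fmax //; lra.
Qed.

Lemma local_max_derive_conditions {f f1 f2 f3 m} :
  (forall t, is_derive t 1 f (f1 t)) -> (forall t, is_derive t 1 f1 (f2 t)) ->
  (forall t, is_derive t 1 f2 (f3 t)) -> {for m, continuous f3} ->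
  is_local_max f m -> [/\ f1 m = 0, f2 m <= 0 & f2 m = 0 -> f3 m = 0].
Proof.
move=> Hf Hf1 Hf2 cf3 [d d0 fmax].
have no_rise e : 0 < e -> ~ (forall u, m < u -> u < m + e -> 0 < f1 u).
  by move=> e0; apply: (right_max_no_rise d e Hf d0 e0) => u mu ud; apply: fmax; lra.
have no_fall e : 0 < e -> ~ (forall u, m - e < u -> u < m -> f1 u < 0).
  by move=> e0; apply: (left_max_no_fall d e Hf d0 e0) => u mu ud; apply: fmax; lra.
have f1m : f1 m = 0.
  case: (ltgtP (f1 m) 0) => // [f1m_lt0|f1m_gt0]; exfalso.
    have [e e0 He] := continuous_lt0_near (is_derive1_continuous Hf1 m) f1m_lt0.
    by apply: (no_fall e e0) => u eu um; apply: He; lra.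
  have [e e0 He] := continuous_gt0_near (is_derive1_continuous Hf1 m) f1m_gt0.
  by apply: (no_rise e e0) => u mu ue; apply: He; lra.
have f2m : f2 m <= 0.
  rewrite leNgt; apply/negP => f2m_gt0.
  have [e e0 He] := continuous_gt0_near (is_derive1_continuous Hf2 m) f2m_gt0.
  apply: (no_rise e e0) => u mu ue; rewrite -f1m.
  by apply: (derive_gt0_lt Hf1 mu) => v mv vu; apply: He; lra.
split=> // f2m0; case: (ltgtP (f3 m) 0) => // [f3m_lt0|f3m_gt0]; exfalso.
  have [e e0 He] := continuous_lt0_near cf3 f3m_lt0.
  apply: (no_fall e e0) => u eu um; rewrite -f1m.
  apply: (derive_gt0_lt Hf1 um) => v uv vm; rewrite -f2m0.
  by apply: (derive_lt0_gt Hf2 vm) => w vw wm; apply: He; lra.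
have [e e0 He] := continuous_gt0_near cf3 f3m_gt0.
apply: (no_rise e e0) => u mu ue; rewrite -f1m.
apply: (derive_gt0_lt Hf1 mu) => v mv vu; rewrite -f2m0.
by apply: (derive_gt0_lt Hf2 mv) => w mw wv; apply: He; lra.
Qed.

Lemma derive_sign_change_local_max {f df t1 t2} :
  (forall t, is_derive t 1 f (df t)) -> continuous df -> t1 < t2 ->
  0 < df t1 -> df t2 < 0 -> exists m, is_local_max f m.
Proof.
move=> Hf cdf t12 df1 df2.
have [m /[!in_itv]/= /andP[t1m mt2] fmax] :=
  EVT_max (ltW t12) (continuous_subspaceT (is_derive1_continuous Hf)).
have {}fmax u : t1 <= u -> u <= t2 -> f u <= f m.
  by move=> t1u ut2; apply: fmax; rewrite in_itv /= t1u ut2.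
have t1_lt_m : t1 < m.
  rewrite lt_def t1m andbT; apply/eqP => mt1; subst m.
  have [e e0 He] := continuous_gt0_near (cdf t1) df1.
  apply: (right_max_no_rise (m := t1) (t2 - t1) e Hf) => // [|u t1u ut2|u t1u ut1e].
  - lra.
  - by apply: fmax; lra.
  - by apply: He; lra.
have m_lt_t2 : m < t2.
  rewrite lt_def mt2 andbT; apply/eqP => t2m; subst m.
  have [e e0 He] := continuous_lt0_near (cdf t2) df2.
  apply: (left_max_no_fall (m := t2) (t2 - t1) e Hf) => // [|u tu ut2|u tu ut2].
  - lra.
  - by apply: fmax; lra.
  - by apply: He; lra.
pose r := Num.min (m - t1) (t2 - m).
have [r_t1 r_t2] : r <= m - t1 /\ r <= t2 - m by rewrite !ge_min !lexx ?orbT.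
exists m; exists r => [|u mu um]; first by rewrite lt_min !subr_gt0 t1_lt_m m_lt_t2.
by apply: fmax; lra.
Qed.

Lemma periodic_local_max {f T} : continuous f -> 0 < T ->
  (forall t, f (t + T) = f t) -> exists m, is_local_max f m.
Proof.
move=> cf T0 fT.
have [m /[!in_itv]/= /andP[m0 mT] fmax] :=
  EVT_max (ltW T0) (continuous_subspaceT cf).
have {}fmax u : 0 <= u -> u <= T -> f u <= f m.
  by move=> u0 uT; apply: fmax; rewrite in_itv /= u0 uT.
exists m, T => // u mu um.
have [u0|u0] := ltP u 0; first by rewrite -fT fmax //; lra.
have [uT|uT] := leP u T; first exact: fmax.
by rewrite -(subrK T u) fT fmax //; lra.
Qed.

End RealDerivatives.

Section LimitsAtInfinity.
Context {R : realType}.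
Implicit Types (f df : R -> R) (s t u : R).

Lemma bounded_funP f : bounded_fun f <-> exists M, forall t, `|f t| <= M.
Proof.
have PF := @globally_properfilter R setT 0 I.
split=> [/ex_bound[M fM]|[M fM]]; first by exists M => t; exact: fM.
by apply/ex_bound; exists M => t _; exact: fM.
Qed.

Lemma bounded_funM f (g : R -> R) :
  bounded_fun f -> bounded_fun g -> bounded_fun (f \* g).
Proof.
move=> /bounded_funP[M fM] /bounded_funP[N gN]; apply/bounded_funP.
by exists (M * N) => t; rewrite normrM ler_pM.
Qed.

Lemma eventually_nondecreasing_cvg {f} t0 : bounded_fun f ->
  (forall s t, t0 <= s -> s <= t -> f s <= f t) -> exists l : R, f t @[t --> +oo] --> l.
Proof.
move=> /bounded_funP[M fM] f_nd; pose g r := f (Num.max r t0).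
have g_nd : nondecreasing_fun g.
  move=> r r' rr'; apply: f_nd; first by rewrite le_max lexx orbT.
  exact: le_max2.
have g_ub : has_ubound (range g).
  by exists M => _ [r _ <-]; have /ler_normlP[] := fM (Num.max r t0).
exists (sup (range g)); have gl := nondecreasing_cvgr g_nd g_ub.
apply: cvg_trans gl; apply: near_eq_cvg; near=> r; rewrite /g max_l //.
Unshelve. all: by end_near. Qed.

Lemma no_local_max_cvg {f df} : (forall t, is_derive t 1 f (df t)) -> continuous df ->
  bounded_fun f -> ~ (exists m, is_local_max f m) -> exists l : R, f t @[t --> +oo] --> l.
Proof.
move=> Hf cdf fb nomax.
have df_ge0 s t : s < t -> 0 < df s -> 0 <= df t.
  move=> st dfs; rewrite leNgt; apply/negP => dft.
  exact: nomax (derive_sign_change_local_max Hf cdf st dfs dft).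
have [[t0 dft0]|] := pselect (exists t0, 0 < df t0).
  apply: (eventually_nondecreasing_cvg t0 fb) => s t t0s st.
  by apply: (derive_ge0_le Hf st) => u su ut; apply: (df_ge0 t0); lra.
move=> /forallNP df_le0.
have [l fl] : exists l : R, (- f) t @[t --> +oo] --> l.
  apply: (eventually_nondecreasing_cvg 0 (bounded_funN fb)) => s t _ st.
  apply: (derive_ge0_le (fun u => is_deriveN (Hf u)) st) => u _ _.
  by rewrite oppr_ge0 leNgt; apply/negP/df_le0.
by exists (- l); apply/cvgNP; rewrite opprK.
Qed.

Lemma barbalat {f f1 f2} (l : R) : (forall t, is_derive t 1 f (f1 t)) ->
  (forall t, is_derive t 1 f1 (f2 t)) -> bounded_fun f2 ->
  f t @[t --> +oo] --> l -> f1 t @[t --> +oo] --> (0 : R).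
Proof.
move=> Hf Hf1 /bounded_funP[K f2K] fl; apply/cvgrPdist_lt => e e0.
have K0 : 0 <= K := le_trans (normr_ge0 _) (f2K 0).
pose h := e / (4 * (K + 1)).
have h0 : 0 < h by rewrite divr_gt0 //; lra.
have Kh : K * h <= e / 4.
  have : (K + 1) * h = e / 4 by rewrite /h; field; lra.
  nra.
have ehq : 0 < e * h / 4 by have := mulr_gt0 e0 h0; lra.
have [T [_ fT]] := (cvgrPdist_lt _ _).1 fl _ ehq.
exists T; split=> [|t Tt]; first by rewrite num_real.
have th : t < t + h by lra.
have [xi /[!in_itv]/= /andP[txi xih] Exi] :=
  MVT th (fun u _ => Hf u) (continuous_subspaceT (is_derive1_continuous Hf)).
have [zeta _ Ezeta] :=
  MVT txi (fun u _ => Hf1 u) (continuous_subspaceT (is_derive1_continuous Hf1)).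
have f1_xi : `|f1 xi| * h < e * h / 2.
  have -> : `|f1 xi| * h = `|f (t + h) - f t|.
    by rewrite Exi (addrC t) addrK normrM (gtr0_norm h0).
  have := fT t Tt; have := fT (t + h) (ltr_wpDr (ltW h0) Tt).
  rewrite !ltr_norml => /andP[? ?] /andP[? ?]; apply/andP; split; lra.
have f2_zeta : `|f2 zeta * (xi - t)| <= K * h.
  by rewrite normrM ler_pM // ger0_norm; lra.
rewrite sub0r normrN (_ : f1 t = f1 xi - f2 zeta * (xi - t)); last by rewrite -Ezeta; ring.
apply: le_lt_trans (ler_normB _ _) _.
have : `|f1 xi| < e / 2 by rewrite -(ltr_pM2r h0); lra.
lra.
Qed.

End LimitsAtInfinity.

Section PairDerivative.
Context {R : realType} {U V : normedModType R}.
Variables (f : R -> U * V) (t : R) (df : U * V).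
Let q h : U * V := h^-1 *: ((f \o shift t) (h *: 1) - f t).

Lemma derive_fst : is_derive t 1 f df -> is_derive t 1 (fun u => (f u).1) df.1.
Proof.
move=> [fd <-]; have l : (fst \o q) @ 0^' --> ('D_1 f t).1.
  exact: cvg_comp _ _ fd (@cvg_fst _ _ (nbhs ('D_1 f t).1) (nbhs ('D_1 f t).2) _).
by split; [apply/cvg_ex; exists ('D_1 f t).1 | apply: cvg_lim].
Qed.

Lemma derive_snd : is_derive t 1 f df -> is_derive t 1 (fun u => (f u).2) df.2.
Proof.
move=> [fd <-]; have l : (snd \o q) @ 0^' --> ('D_1 f t).2.
  exact: cvg_comp _ _ fd (@cvg_snd _ _ (nbhs ('D_1 f t).1) (nbhs ('D_1 f t).2) _).
by split; [apply/cvg_ex; exists ('D_1 f t).2 | apply: cvg_lim].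
Qed.

End PairDerivative.

Lemma norm_rossler_rate_le {R : realType} (P a Q B dx dy dz : R) : `|dx| <= B ->
  `|2 * (P * (dx * dz) + a * dy ^+ 2 + (dx + Q) * dz ^+ 2)| <=
  (`|P| + 2 * `|a| + 2 * (B + `|Q|)) * (dx ^+ 2 + dy ^+ 2 + dz ^+ 2).
Proof.
move=> dxB; have B0 : 0 <= B := le_trans (normr_ge0 _) dxB.
have sx := sqr_ge0 dx; have sy := sqr_ge0 dy; have sz := sqr_ge0 dz.
have amgm : `|dx * dz| <= (dx ^+ 2 + dz ^+ 2) / 2.
  rewrite normrM -[dx ^+ 2]real_normK ?num_real // -[dz ^+ 2]real_normK ?num_real //.
  have := sqr_ge0 (`|dx| - `|dz|); lra.
have cubic : `|(dx + Q) * dz ^+ 2| <= (B + `|Q|) * dz ^+ 2.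
  rewrite normrM (ger0_norm sz) ler_wpM2r //.
  by rewrite (le_trans (ler_normD _ _)) // lerD2r.
rewrite normrM (@ger0_norm _ 2) //.
have := ler_normD (P * (dx * dz) + a * dy ^+ 2) ((dx + Q) * dz ^+ 2).
have := ler_normD (P * (dx * dz)) (a * dy ^+ 2).
have := normrM P (dx * dz); have : `|a * dy ^+ 2| = `|a| * dy ^+ 2.
  by rewrite normrM (ger0_norm sy).
have := normr_ge0 P; have := normr_ge0 a; have := normr_ge0 Q; have := normr_ge0 (dx * dz).
nra.
Qed.

Lemma is_fixed_pointP {R : realType} (a b c : R) q : is_fixed_point a b c q <->
  [/\ - py q - pz q = 0, px q + a * py q = 0 & b * px q + pz q * (px q - c) = 0].
Proof. by split=> [[-> -> ->] | [e1 e2 e3]] //; rewrite /is_fixed_point /rossler e1 e2 e3. Qed.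

Lemma H_p_transverse {R : realType} (a b c : R) q : 0 < a -> H_p a q ->
  transverse_to_plane a b c q.
Proof.
move=> a0 [qy qz].
have qxy : px q + a * py q = 0 by rewrite qy mulrCA mulfV ?gt_eqF // mulr1 subrr.
have qyz : - py q < pz q by rewrite qy mulNr opprK.
change (- py q - pz q + a * (px q + a * py q) != 0).
by rewrite qxy mulr0 addr0 lt_eqF //; lra.
Qed.

Section RosslerSolution.
Context {R : realType}.
Variables (a b c : R) (x y z : R -> R).
Implicit Types (s t : R).
Hypothesis x_derive : forall t, is_derive t 1 x (- y t - z t).
Hypothesis y_derive : forall t, is_derive t 1 y (x t + a * y t).
Hypothesis z_derive : forall t, is_derive t 1 z (b * x t + z t * (x t - c)).

Definition state t : R * R * R := ((x t, y t), z t).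

Definition ydot t := x t + a * y t.
Definition yddot t := - y t - z t + a * ydot t.
Definition zdot t := b * x t + z t * (x t - c).
Definition ydddot t := - ydot t - zdot t + a * yddot t.
Definition zddot t := b * (- y t - z t) + (z t * (- y t - z t) + (x t - c) * zdot t).

(* is_derive is a type class: is_derive_eq leaves the derivative of a sum or
   product to instance search, which also uses the derivative hypotheses in
   the context. *)
Lemma ydot_derive t : is_derive t 1 ydot (yddot t).
Proof. exact: is_derive_eq. Qed.

Lemma zdot_derive t : is_derive t 1 zdot (zddot t).
Proof. by apply: is_derive_eq; rewrite subr0. Qed.

Lemma yddot_derive t : is_derive t 1 yddot (ydddot t).
Proof. have Hydot := ydot_derive; have Hzdot := zdot_derive; exact: is_derive_eq. Qed.

Lemma ydddot_continuous : continuous ydddot.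
Proof.
have Hydot := ydot_derive; have Hyddot := yddot_derive; have Hzdot := zdot_derive.
exact: (is_derive1_continuous (df := fun t => - yddot t - zddot t + a * ydddot t)).
Qed.

Lemma local_max_y_H_p m : 0 < a -> is_local_max y m ->
  ~ is_fixed_point a b c (state m) -> H_p a (state m).
Proof.
move=> a0 ymax not_fixed.
have [ydot0 yddot_le0 yddot0] : [/\ ydot m = 0, yddot m <= 0 & yddot m = 0 -> ydddot m = 0].
  exact: local_max_derive_conditions y_derive ydot_derive yddot_derive
    (ydddot_continuous m) ymax.
have yddotE : yddot m = - y m - z m by rewrite /yddot ydot0 mulr0 addr0.
have yddot_lt0 : yddot m < 0.
  rewrite lt_def yddot_le0 andbT; apply/eqP => /esym yddot_eq0; apply: not_fixed.
  have := yddot0 yddot_eq0; rewrite /ydddot ydot0 yddot_eq0 mulr0 addr0 oppr0 sub0r.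
  by move=> /eqP; rewrite oppr_eq0 => /eqP zdot0; apply/is_fixed_pointP; split; rewrite -?yddotE.
have xE : x m / a = - y m.
  by apply/(canLR (mulfK (lt0r_neq0 a0))); move: ydot0; rewrite /ydot mulNr; lra.
by split; rewrite /state /px /py /pz /= ?mulNr xE ?opprK //; lra.
Qed.

Section Stationary.
Variables (X Y Z : R).
Hypotheses (xdot_eq0 : - Y - Z = 0) (ydot_eq0 : X + a * Y = 0)
  (zdot_eq0 : b * X + Z * (X - c) = 0).

Let E t := (x t - X) ^+ 2 + (y t - Y) ^+ 2 + (z t - Z) ^+ 2.
(* E', once the vanishing of the vector field at (X, Y, Z) is subtracted *)
Let dE t := 2 * ((b + Z - 1) * ((x t - X) * (z t - Z)) + a * (y t - Y) ^+ 2 +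
  (x t - X + (X - c)) * (z t - Z) ^+ 2).

Lemma energy_derive t : is_derive t 1 E (dE t).
Proof.
apply: is_derive_eq; rewrite -![_ *: _]/(_ * _).
transitivity (dE t + 2 * ((x t - X) * (- Y - Z) + (y t - Y) * (X + a * Y) +
  (z t - Z) * (b * X + Z * (X - c)))).
  by rewrite /dE; ring.
by rewrite xdot_eq0 ydot_eq0 zdot_eq0 !(mulr0, addr0).
Qed.

Lemma energy_rate_bound {lo hi} : lo <= hi ->
  exists K, forall u, lo <= u -> u <= hi -> `|dE u| <= K * E u.
Proof.
move=> lohi.
have cx : continuous (fun u => `|x u - X|).
  move=> u; apply: (continuous_comp (f := fun v => x v - X)); last exact: norm_continuous.
  by apply: continuousB; [exact: is_derive1_continuous x_derive u | exact: cst_continuous].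
have [u0 _ xB] := EVT_max lohi (continuous_subspaceT cx).
exists (`|b + Z - 1| + 2 * `|a| + 2 * (`|x u0 - X| + `|X - c|)) => u lou uhi.
by apply: norm_rossler_rate_le; apply: xB; rewrite in_itv /= lou uhi.
Qed.

Lemma fixed_point_solution_constant s t : x s = X -> y s = Y -> z s = Z ->
  [/\ x t = X, y t = Y & z t = Z].
Proof.
move=> xs ys zs.
have E_ge0 u : 0 <= E u by rewrite !addr_ge0 ?sqr_ge0.
have Es : E s = 0 by rewrite /E xs ys zs !subrr expr0n /= !addr0.
have Et : E t = 0.
  have [st|ts] := leP s t.
    have [K dEK] := energy_rate_bound st.
    exact: (gronwall_eq0 K energy_derive E_ge0 st dEK).1 Es.
  have [K dEK] := energy_rate_bound (ltW ts).
  exact: (gronwall_eq0 K energy_derive E_ge0 (ltW ts) dEK).2 Es.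
move/eqP: Et; rewrite !paddr_eq0 ?addr_ge0 ?sqr_ge0 // !sqrf_eq0 !subr_eq0.
by move=> /andP[/andP[/eqP -> /eqP ->] /eqP ->].
Qed.

End Stationary.

Lemma fixed_point_stationary s t :
  is_fixed_point a b c (state s) -> state t = state s.
Proof.
move=> /is_fixed_pointP[xdot_eq0 ydot_eq0 zdot_eq0].
have [xt yt zt] := fixed_point_solution_constant _ _ _ xdot_eq0 ydot_eq0 zdot_eq0
  s t erefl erefl erefl.
by rewrite /state xt yt zt.
Qed.

Ltac bounded_poly := rewrite /ydddot /yddot /ydot /zddot /zdot;
  repeat first [ apply: bounded_funD | apply: bounded_funN | apply: bounded_funM
               | apply: bounded_cst | assumption ].

Lemma bounded_solution_cvg_fixed_point : 0 < a ->
  bounded_fun x -> bounded_fun y -> bounded_fun z ->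
  (forall t, ~ H_p a (state t)) -> (forall t, ~ is_fixed_point a b c (state t)) ->
  exists2 q, is_fixed_point a b c q & state t @[t --> +oo] --> q.
Proof.
move=> a0 xb yb zb noH noF.
have nomax : ~ exists m, is_local_max y m.
  by move=> [m ymax]; exact: noH m (local_max_y_H_p m a0 ymax (noF m)).
have yddot_b : bounded_fun yddot by bounded_poly.
have ydddot_b : bounded_fun ydddot by bounded_poly.
have zddot_b : bounded_fun zddot by bounded_poly.
have [Y yY] := no_local_max_cvg y_derive (is_derive1_continuous ydot_derive) yb nomax.
have ydot0 := barbalat (f1 := ydot) Y y_derive ydot_derive yddot_b yY.
have yddot0 := barbalat 0 ydot_derive yddot_derive ydddot_b ydot0.
have zY : z t @[t --> +oo] --> - Y.
  have zlim : (- y t - yddot t + a * ydot t) @[t --> +oo] --> - Y - 0 + a * 0.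
    exact: cvgD (cvgB (cvgN yY) yddot0) (cvgMl_tmp ydot0).
  rewrite subr0 mulr0 addr0 in zlim; apply: cvg_trans zlim; apply: near_eq_cvg.
  by near=> t; rewrite /yddot; ring.
have xY : x t @[t --> +oo] --> - (a * Y).
  have xlim : (ydot t - a * y t) @[t --> +oo] --> 0 - a * Y.
    exact: cvgB ydot0 (cvgMl_tmp yY).
  rewrite sub0r in xlim; apply: cvg_trans xlim; apply: near_eq_cvg.
  by near=> t; rewrite /ydot; ring.
have zdot0 := barbalat (- Y) z_derive zdot_derive zddot_b zY.
have zdotL : zdot t @[t --> +oo] --> b * - (a * Y) + - Y * (- (a * Y) - c).
  exact: cvgD (cvgMl_tmp xY) (cvgM zY (cvgB xY (cvg_cst c))).
exists ((- (a * Y), Y), - Y); last exact: cvg_pair (cvg_pair xY yY) zY.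
apply/is_fixed_pointP; split; rewrite /px /py /pz /=; [ring | ring |].
exact: cvg_unique _ zdotL zdot0.
Unshelve. all: by end_near. Qed.

End RosslerSolution.

Arguments local_max_y_H_p {R a b c x y z}.
Arguments fixed_point_stationary {R a b c x y z}.
Arguments bounded_solution_cvg_fixed_point {R a b c x y z}.

Section RosslerTrajectory.
Context {R : realType}.
Variables (a b c : R).
Implicit Types (t T : R) (g : R -> R * R * R) (S : set (R * R * R)).

Lemma trajectory_coordinates {g} : is_trajectory a b c g ->
  [/\ forall t, is_derive t 1 (fun u => px (g u)) (- py (g t) - pz (g t)),
      forall t, is_derive t 1 (fun u => py (g u)) (px (g t) + a * py (g t)) &
      forall t, is_derive t 1 (fun u => pz (g u)) (b * px (g t) + pz (g t) * (px (g t) - c))].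
Proof.
move=> g_traj; split=> t; have := g_traj t.
- by move=> /derive_fst/derive_fst.
- by move=> /derive_fst/derive_snd.
- by move=> /derive_snd.
Qed.

Lemma state_trajectory {g} t :
  state (fun u => px (g u)) (fun u => py (g u)) (fun u => pz (g u)) t = g t.
Proof. by rewrite /state /=; case: (g t) => [[]]. Qed.

Lemma bounded_invariant_set_meets_H_p S : 0 < a ->
  S !=set0 -> bounded3 S -> invariant_set a b c S ->
  (forall q, closure S q -> ~ is_fixed_point a b c q) ->
  exists q, S q /\ H_p a q /\ transverse_to_plane a b c q.
Proof.
move=> a0 [q0 Sq0] [M SM] S_inv no_fixed.
have [g [g_traj [_ gS]]] := S_inv q0 Sq0.
have [[t gtH] | noH] := pselect (exists t, H_p a (g t)).
  by exists (g t); split; [|split; last exact: H_p_transverse].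
have [Hx Hy Hz] := trajectory_coordinates g_traj.
have gM t : [/\ `|px (g t)| <= M, `|py (g t)| <= M & `|pz (g t)| <= M].
  by have [? []] := SM _ (gS t).
have [q q_fixed gq] : exists2 q, is_fixed_point a b c q & g t @[t --> +oo] --> q.
  have := bounded_solution_cvg_fixed_point Hx Hy Hz a0.
  rewrite (funext (state_trajectory (g := g))); apply.
  - by apply/bounded_funP; exists M => t; have [] := gM t.
  - by apply/bounded_funP; exists M => t; have [] := gM t.
  - by apply/bounded_funP; exists M => t; have [] := gM t.
  - by move=> t gtH; apply: noH; exists t.
  - by move=> t; apply: no_fixed; exact: subset_closure.
have qS : closure S q.
  by apply: (closed_cvg _ (@closed_closure _ S) _ _ gq); near=> t; apply: subset_closure.
by case: (no_fixed q qS q_fixed).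
Unshelve. all: by end_near. Qed.

Lemma periodic_orbit_meets_H_p g T : 0 < a -> is_trajectory a b c g -> 0 < T ->
  (forall t, g (t + T) = g t) -> (exists t1 t2, g t1 <> g t2) ->
  exists t, H_p a (g t) /\ transverse_to_plane a b c (g t).
Proof.
move=> a0 g_traj T0 gT [t1 [t2 g12]].
have [Hx Hy Hz] := trajectory_coordinates g_traj.
have [m ymax] : exists m, is_local_max (fun u => py (g u)) m.
  by apply: (periodic_local_max (is_derive1_continuous Hy) T0) => t /=; rewrite gT.
exists m; suff gmH : H_p a (g m) by split; last exact: H_p_transverse.
rewrite -state_trajectory; apply: (local_max_y_H_p Hx Hy Hz m a0 ymax).
move=> m_fixed; apply: g12.
have stat t := fixed_point_stationary Hx Hy Hz m t m_fixed.
by rewrite -(state_trajectory t1) -(state_trajectory t2) !stat.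
Qed.

End RosslerTrajectory.

Theorem lemma2p1 (R : realType) (P : set (R * R * R))
  (HPopen : open P) (HP : forall p, P p -> rossler_param_ok p)
  (a b c : R) (Habc : P ((a, b), c)) :
  (forall S : set (R * R * R),
      S !=set0 -> bounded3 S -> invariant_set a b c S ->
      (forall q, closure S q -> ~ is_fixed_point a b c q) ->
      exists q, S q /\ H_p a q /\ transverse_to_plane a b c q) /\
  (forall (g : R -> R * R * R) (T : R),
      is_trajectory a b c g -> 0 < T -> (forall t, g (t + T) = g t) ->
      (exists t1 t2, g t1 <> g t2) ->
      exists t, H_p a (g t) /\ transverse_to_plane a b c (g t)).
Proof.
have [[/andP[a0 _] _] _ _] := HP _ Habc.
split=> [S | g T]; [exact: bounded_invariant_set_meets_H_p | exact: periodic_orbit_meets_H_p].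
Qed.
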